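(* Let $\mathcal{K}$ be a finite set of arms, $C_0\ge 10$, $t_0=2C_0|\mathcal{K}|$ and $T>\frac{(t_0+1)^2}{e^2}$. Under the $\epsilon$-decay random sampling method, for each arm $k\in\mathcal{K}$ the number $n_k$ of random samples of arm $k$ drawn up to time $T$ satisfies $$C_0(1+\log(T+1)-\log(t_0+1))\le n_k \le3C_0(1+\log(T)-\log(t_0))$$ with probability at least $1-\frac{2}{T+1}$.
   Context: $\epsilon$-decay random sampling method: at each time $t=1,2,\dots$, independently of everything else, the decision-maker draws a random sample with probability $\min\{1,t_0/t\}$; when a random sample is drawn, an arm is selected uniformly at random from $\mathcal{K}$ (each with probability $1/|\mathcal{K}|$). $n_k$ is the number of times $t\le T$ at which a random sample was drawn and arm $k$ was selected. *)

From HB Require Import structures.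
From mathcomp Require Import all_boot all_order all_algebra.
From mathcomp Require Import all_classical all_reals all_analysis.
Set Implicit Arguments. Unset Strict Implicit. Unset Printing Implicit Defensive.
Import Order.TTheory GRing.Theory Num.Theory.
Local Open Scope ring_scope.

(* An outcome is a finite function w : 'I_T -> option K, where w i (for time
   t = i+1) is [None] if no random sample was drawn at time t, and [Some k]
   if a random sample was drawn and arm k was selected. *)

Definition eps_prob (R : realType) (t0 : R) (t : nat) : R :=
  Num.min 1 (t0 / t%:R).

Definition step_law (R : realType) (K : finType) (t0 : R) (t : nat)
  (o : option K) : R :=
  match o with
  | None => 1 - eps_prob t0 t
  | Some _ => eps_prob t0 t / #|K|%:R
  end.

Definition path_prob (R : realType) (K : finType) (t0 : R) (T : nat)
  (w : {ffun 'I_T -> option K}) : R :=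
  \prod_(i < T) step_law t0 i.+1 (w i).

Definition eps_decay_Pr (R : realType) (K : finType) (t0 : R) (T : nat)
  (E : pred {ffun 'I_T -> option K}) : R :=
  \sum_(w | E w) path_prob t0 w.

Definition n_arm (K : finType) (T : nat) (k : K)
  (w : {ffun 'I_T -> option K}) : nat :=
  #|[set i : 'I_T | w i == Some k]|.

From HB Require Import structures.
From mathcomp Require Import all_boot all_order all_algebra.
From mathcomp Require Import all_classical all_reals all_analysis.
From mathcomp Require Import lra ring.
Import Order.TTheory GRing.Theory Num.Theory.
Local Open Scope ring_scope.

Set Implicit Arguments.
Unset Strict Implicit.
Unset Printing Implicit Defensive.

(* n_k is a sum of independent indicators with success probabilities
   p_t = min(1, t0/t) / |K|, so its generating function is the product of the
   1 + p_t (z - 1) and Chernoff's bound applies, with z = 1/2 for the lower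
   tail and z = 3/2 for the upper one.  Comparing sum_t min(1, t0/t) with
   logarithms puts the mean of n_k between 2 C0 L - 1 and 2 C0 U, where
   L = 1 + ln(T+1) - ln(t0+1) and U = 1 + ln T - ln t0.  The hypothesis on T
   reads 2 ln(t0+1) - 2 < ln T, which gives 2 L > ln(T+1) and 2 U > ln T;
   with C0 >= 10 each tail then has probability at most 1/(T+1). *)

Lemma sum_option (V : nmodType) (K : finType) (F : option K -> V) :
  \sum_(o : option K) F o = F None + \sum_(j : K) F (Some j).
Proof.
rewrite (bigD1 None) //=; congr (_ + _).
rewrite (reindex_omap Some id) //=; last by case.
by apply: eq_bigl => j /=; rewrite eqxx.
Qed.

Lemma prod_1DM_le_expR (R : realType) (I : finType) (q : I -> R) (z : R) :
  0 <= z -> (forall i, 0 <= q i <= 1) ->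
  \prod_i (1 + q i * (z - 1)) <= expR ((z - 1) * \sum_i q i).
Proof.
move=> z_ge0 q01; rewrite mulr_sumr expR_sum; apply: ler_prod => i _.
have /andP[q_ge0 q_le1] := q01 i.
apply/andP; split; last by rewrite mulrC expR_ge1Dx.
have -> : 1 + q i * (z - 1) = (1 - q i) + q i * z by ring.
by apply: addr_ge0; [rewrite subr_ge0 | exact: mulr_ge0].
Qed.

Lemma lnB_le (R : realType) (a b : R) : 0 < a -> 0 < b -> ln b - ln a <= (b - a) / a.
Proof.
move=> a_gt0 b_gt0; have ba_gt0 : 0 < b / a by exact: divr_gt0.
have -> : (b - a) / a = b / a - 1 by rewrite mulrBl divff ?gt_eqF.
by rewrite -ln_div ?posrE // -{1}[b / a](subrK 1) addrC le_ln1Dx //; lra.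
Qed.

Section HarmonicLn.
Variable R : realType.

Lemma ln_le_sum_harmonic (m n : nat) : (m <= n)%N ->
  ln n.+1%:R - ln m.+1%:R <= \sum_(m <= i < n) harmonic i :> R.
Proof.
move=> le_mn; rewrite -(telescope_sumr (fun i => ln i.+1%:R)) //.
apply: ler_sum_nat => i _ /=; apply: le_trans (lnB_le _ _) _; rewrite ?ltr0n //.
by rewrite -natr1 addrAC subrr add0r div1r.
Qed.

Lemma sum_harmonic_le_ln (m n : nat) : (0 < m)%N -> (m <= n)%N ->
  \sum_(m <= i < n) harmonic i <= ln n%:R - ln m%:R :> R.
Proof.
move=> m_gt0 le_mn; rewrite -(telescope_sumr (fun i => ln i%:R)) //.
apply: ler_sum_nat => i /andP[le_mi _] /=.
have i_gt0 : (0 < i)%N by apply: leq_trans le_mi.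
have := @lnB_le R i.+1%:R i%:R (ltr0Sn _ _) ltac:(by rewrite ltr0n).
by rewrite -natr1 opprD addrA subrr add0r mulNr div1r; lra.
Qed.

End HarmonicLn.

Section EpsProbSum.
Variables (R : realType) (t0 : R) (T : nat).
Hypotheses (t0_gt0 : 0 < t0) (t0_lt_T : t0 < T%:R).

Local Notation m := (Num.truncn t0).

Lemma truncn_lt_T : (m < T)%N.
Proof.
rewrite -(ltr_nat R); apply: le_lt_trans t0_lt_T.
by have /andP[] := truncn_itv (ltW t0_gt0).
Qed.

Lemma sum_eps_prob_truncn :
  \sum_(i < T) eps_prob t0 i.+1 = m%:R + t0 * \sum_(m <= i < T) harmonic i.
Proof.
have /andP[m_le m_gt] := truncn_itv (ltW t0_gt0).
rewrite -(big_mkord xpredT (fun i => eps_prob t0 i.+1)).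
rewrite (big_cat_nat _ (n := m)) //=; last exact: ltnW truncn_lt_T.
congr (_ + _).
  rewrite (eq_big_nat _ _ (F2 := fun=> 1)) ?sumr_const_nat ?subn0 // => i /andP[_ lt_im].
  by rewrite /eps_prob min_l // ler_pdivlMr ?ltr0n // mul1r (le_trans _ m_le) // ler_nat.
rewrite big_distrr /=; apply: eq_big_nat => i /andP[le_mi _].
by rewrite /eps_prob min_r // ler_pdivrMr ?ltr0n // mul1r ltW // (lt_le_trans m_gt) // ler_nat.
Qed.

Lemma sum_eps_prob_ge :
  t0 * (1 + ln (T%:R + 1) - ln (t0 + 1)) - 1 <= \sum_(i < T) eps_prob t0 i.+1.
Proof.
have /andP[m_le m_gt] := truncn_itv (ltW t0_gt0).
rewrite sum_eps_prob_truncn.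
have H_ge := @ln_le_sum_harmonic R _ _ (ltnW truncn_lt_T).
have ln_m : ln m.+1%:R <= ln (t0 + 1).
  by rewrite ler_ln ?posrE ?ltr0n ?addr_gt0 // -natr1 lerD2r.
rewrite -!natr1 in H_ge ln_m m_gt.
have : t0 * (ln (T%:R + 1) - ln (t0 + 1)) <= t0 * \sum_(m <= i < T) harmonic i.
  by rewrite ler_pM2l //; apply: le_trans H_ge; rewrite lerD2l lerN2.
lra.
Qed.

Lemma sum_eps_prob_le :
  \sum_(i < T) eps_prob t0 i.+1 <= t0 * (1 + ln T%:R - ln t0).
Proof.
have /andP[m_le m_gt] := truncn_itv (ltW t0_gt0).
have H_le : \sum_(m <= i < T) harmonic i <= m.+1%:R^-1 + (ln T%:R - ln m.+1%:R) :> R.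
  by rewrite big_ltn ?truncn_lt_T // lerD2l sum_harmonic_le_ln // truncn_lt_T.
have ln_t0 := lnB_le (ltr0Sn R m) t0_gt0.
have y_gt0 : 0 < m.+1%:R :> R by rewrite ltr0n.
have y_le : m.+1%:R <= t0 + 1 by rewrite -natr1 lerD2r.
rewrite sum_eps_prob_truncn -[m%:R](addrK 1) natr1.
move: (m.+1%:R) y_gt0 y_le m_gt H_le ln_t0 => y y_gt0 y_le m_gt H_le ln_t0.
have t0_y : y - 1 + t0 / y + t0 * ((t0 - y) / y) <= t0.
  rewrite -subr_ge0.
  have -> : t0 - (y - 1 + t0 / y + t0 * ((t0 - y) / y)) = (t0 + 1 - y) * (y - t0) / y.
    by field; rewrite gt_eqF.
  by apply: divr_ge0; [apply: mulr_ge0|]; lra.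
have : t0 * \sum_(m <= i < T) harmonic i <= t0 * (y^-1 + (ln T%:R - ln y)).
  by rewrite ler_pM2l.
have : t0 * (ln t0 - ln y) <= t0 * ((t0 - y) / y) by rewrite ler_pM2l.
lra.
Qed.

End EpsProbSum.

Section ExpBounds.
Variable R : realType.

Lemma expR_le_pow (x : R) (n : nat) : (0 < n)%N -> x < n%:R ->
  expR x <= (n%:R / (n%:R - x)) ^+ n.
Proof.
move=> n_gt0 x_lt; have n_pos : (0 : R) < n%:R by rewrite ltr0n.
set y := x / n%:R; have y_lt1 : y < 1 by rewrite ltr_pdivrMr // mul1r.
have -> : n%:R / (n%:R - x) = (1 - y)^-1.
  by rewrite /y; field; rewrite lt0r_neq0 // lt0r_neq0 // subr_gt0.
have -> : x = n%:R * y by rewrite /y mulrC divfK ?lt0r_neq0.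
rewrite expRM_natl lerXn2r ?nnegrE ?expR_ge0 ?invr_ge0 ?subr_ge0 ?(ltW y_lt1) //.
by rewrite -[expR y]invrK -expRN lef_pV2 ?posrE ?expR_gt0 ?subr_gt0 // expR_ge1Dx.
Qed.

Lemma pow_le_expR (x : R) (n : nat) : (0 < n)%N -> 0 <= x ->
  (1 + x / n%:R) ^+ n <= expR x.
Proof.
move=> n_gt0 x_ge0; have n_pos : (0 : R) < n%:R by rewrite ltr0n.
set y := x / n%:R; have y_ge0 : 0 <= y by rewrite divr_ge0 // ltW.
have -> : x = n%:R * y by rewrite /y mulrC divfK ?lt0r_neq0.
by rewrite expRM_natl lerXn2r ?nnegrE ?expR_ge0 ?addr_ge0 ?expR_ge1Dx.
Qed.

Lemma expR1_le3 : expR 1 <= 3 :> R.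
Proof.
apply: le_trans (@expR_le_pow 1 8 _ _) _; rewrite ?ltr1n //.
have -> : (8%:R : R) / (8%:R - 1) = 8 / 7 by congr (_ / _); lra.
rewrite expr_div_n; lra.
Qed.

Lemma expR2_le9 : expR 2 <= 9 :> R.
Proof.
rewrite -[2]mulr1 expRM_natl (_ : 9 = 3 ^+ 2); last by rewrite expr2; lra.
by rewrite lerXn2r ?nnegrE ?expR_ge0 ?expR1_le3.
Qed.

Lemma ln2_le : ln 2 <= 3 / 4 :> R.
Proof.
rewrite -[leRHS]expRK ler_ln ?posrE ?expR_gt0 //.
by apply: le_trans (@pow_le_expR (3 / 4) 8 _ _) => //; lra.
Qed.

(* 64/159 turns the bound (1 - x/64)^-64 on expR x into (159/158)^64. *)
Lemma ln3half_ge : 64 / 159 <= ln (3 / 2) :> R.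
Proof.
rewrite -[leLHS]expRK ler_ln ?posrE ?expR_gt0 //.
apply: le_trans (@expR_le_pow (64 / 159) 64 _ _) _ => //; first lra.
have -> : (64%:R : R) / (64%:R - 64 / 159) = 159 / 158 by field.
rewrite expr_div_n; lra.
Qed.

End ExpBounds.

Definition arm_draws_mean {R : realType} (K : finType) (t0 : R) (T : nat) : R :=
  \sum_(i < T) eps_prob t0 i.+1 / #|K|%:R.

Lemma arm_draws_meanE (R : realType) (K : finType) (t0 : R) (T : nat) :
  arm_draws_mean K t0 T = (\sum_(i < T) eps_prob t0 i.+1) / #|K|%:R.
Proof. by rewrite /arm_draws_mean mulr_suml. Qed.

Section EpsDecayProbability.
Variables (R : realType) (K : finType) (t0 : R) (T : nat).
Local Notation outcome := {ffun 'I_T -> option K}.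
Implicit Types (w : outcome) (E F : pred outcome).

Local Notation Pr := (@eps_decay_Pr R K t0 T).
Local Notation mu := (arm_draws_mean K t0 T).

Lemma eps_prob_le1 t : eps_prob t0 t <= 1.
Proof. by rewrite /eps_prob ge_min lexx. Qed.

Lemma step_law_pgf t (k : K) (z : R) :
  \sum_o step_law t0 t o * (if o == Some k then z else 1) =
  1 + eps_prob t0 t / #|K|%:R * (z - 1).
Proof.
have K_gt0 : (0 < #|K|)%N by apply/card_gt0P; exists k.
rewrite sum_option /= mulr1.
under eq_bigr => j _ do rewrite (inj_eq Some_inj).
rewrite (bigD1 k) //= eqxx.
under eq_bigr => j /negPf -> do rewrite mulr1.
rewrite sumr_const cardC1 -[_ *+ #|K|.-1]mulr_natr.
have -> : (#|K|.-1)%:R = #|K|%:R - 1 :> R.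
  by rewrite -[in RHS](prednK K_gt0) -natr1 addrK.
by field; rewrite pnatr_eq0 -lt0n.
Qed.

Lemma eps_decay_pgf (k : K) (z : R) :
  \sum_(w : outcome) path_prob t0 w * z ^+ n_arm k w =
  \prod_(i < T) (1 + eps_prob t0 i.+1 / #|K|%:R * (z - 1)).
Proof.
under [RHS]eq_bigr => i _ do rewrite -(step_law_pgf _ k).
rewrite bigA_distr_bigA /=; apply: eq_bigr => w _.
rewrite big_split /= /n_arm -prodr_const big_mkcond /=; congr (_ * _).
by apply: eq_bigr => i _; rewrite inE.
Qed.

(* Without arms the outcome law loses the mass of the draws, hence [0 < #|K|]. *)
Lemma eps_decay_PrC E : (0 < #|K|)%N -> Pr (fun w => ~~ E w) = 1 - Pr E.
Proof.
case/card_gt0P=> k _.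
have total : \sum_(w : outcome) path_prob t0 w = 1.
  have := eps_decay_pgf k 1; under eq_bigr do rewrite expr1n mulr1.
  by move=> ->; apply: big1 => i _; rewrite subrr mulr0 addr0.
by rewrite /eps_decay_Pr -total [in RHS](bigID E) /= addrAC subrr add0r.
Qed.

Hypothesis t0_ge0 : 0 <= t0.

Lemma eps_prob_ge0 t : 0 <= eps_prob t0 t.
Proof. by rewrite le_min ler01 divr_ge0. Qed.

Lemma path_prob_ge0 w : 0 <= path_prob t0 w.
Proof.
apply: prodr_ge0 => i _; case: (w i) => [j|] /=; last by rewrite subr_ge0 eps_prob_le1.
by rewrite divr_ge0 ?eps_prob_ge0.
Qed.

Lemma eps_decay_markov E (g : outcome -> R) :
  (forall w, 0 <= g w) -> (forall w, E w -> 1 <= g w) ->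
  Pr E <= \sum_w path_prob t0 w * g w.
Proof.
move=> g_ge0 g_ge1; rewrite [leRHS](bigID E) /= -[leLHS]addr0.
apply: lerD; last by apply: sumr_ge0 => w _; rewrite mulr_ge0 ?path_prob_ge0.
apply: ler_sum => w /g_ge1 g_ge1w.
by rewrite -{1}[path_prob _ _]mulr1 ler_wpM2l ?path_prob_ge0.
Qed.

Lemma eps_decay_Pr_sub E F : (forall w, E w -> F w) -> Pr E <= Pr F.
Proof.
move=> EF; rewrite [leRHS](bigID E) /= (eq_bigl E) => [|w]; last exact/andb_idl/EF.
by rewrite lerDl sumr_ge0 // => w _; apply: path_prob_ge0.
Qed.

Lemma eps_decay_PrU E F : Pr (fun w => E w || F w) <= Pr E + Pr F.
Proof.
rewrite /eps_decay_Pr !(big_mkcond (fun w => _ _)) -big_split /=.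
apply: ler_sum => w _; have := path_prob_ge0 w.
by case: (E w); case: (F w) => /=; lra.
Qed.

Lemma eps_decay_Pr_chernoff (k : K) (s c : R) :
  Pr (fun w => s * c <= s * (n_arm k w)%:R) <= expR (- (s * c) + (expR s - 1) * mu).
Proof.
apply: le_trans (@eps_decay_markov _ (fun w => expR (s * (n_arm k w)%:R - s * c)) _ _) _.
- by move=> w; exact: expR_ge0.
- by move=> w sc_le; rewrite -[leLHS]expR0 ler_expR subr_ge0.
have -> : \sum_(w : outcome) path_prob t0 w * expR (s * (n_arm k w)%:R - s * c) =
    expR (- (s * c)) * \sum_(w : outcome) path_prob t0 w * expR s ^+ n_arm k w.
  by rewrite mulr_sumr; apply: eq_bigr => w _; rewrite addrC expRD expRM_natr mulrCA.
rewrite eps_decay_pgf expRD ler_wpM2l ?expR_ge0 // prod_1DM_le_expR ?expR_ge0 // => i.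
have K_gt0 : (0 < #|K|)%N by apply/card_gt0P; exists k.
rewrite divr_ge0 ?eps_prob_ge0 //= ler_pdivrMr ?ltr0n // mul1r.
by rewrite (le_trans (eps_prob_le1 _)) // ler1n.
Qed.

Lemma eps_decay_PrI_ge E F : (0 < #|K|)%N ->
  1 - Pr (fun w => ~~ E w) - Pr (fun w => ~~ F w) <= Pr (fun w => E w && F w).
Proof.
move=> K_gt0.
have PrEF : Pr (fun w => ~~ (E w && F w)) = Pr (fun w => ~~ E w || ~~ F w).
  by apply: eq_bigl => w; rewrite negb_and.
have := eps_decay_PrC (fun w => E w && F w) K_gt0.
have := eps_decay_PrU (fun w => ~~ E w) (fun w => ~~ F w).
rewrite -PrEF; lra.
Qed.

End EpsDecayProbability.

Section ArmDrawsBounds.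
Variables (R : realType) (K : finType) (C0 t0 : R) (T : nat) (k : K).
Hypotheses (C0_ge10 : 10 <= C0) (t0E : t0 = 2 * C0 * #|K|%:R)
  (T_gt : (t0 + 1) ^+ 2 / (expR 1) ^+ 2 < T%:R).

Local Notation Pr := (@eps_decay_Pr R K t0 T).
Local Notation mu := (arm_draws_mean K t0 T).
Local Notation lower_rate := (1 + ln (T%:R + 1) - ln (t0 + 1)).
Local Notation upper_rate := (1 + ln T%:R - ln t0).

Let K_gt0 : (0 < #|K|)%N. Proof. by apply/card_gt0P; exists k. Qed.

Let K_ge1 : 1 <= #|K|%:R :> R. Proof. by rewrite ler1n. Qed.

Lemma t0_ge20 : 20 <= t0.
Proof. by rewrite t0E -mulrA; have := ler_pM _ _ C0_ge10 K_ge1; rewrite mulr1; lra. Qed.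

Lemma t0D1_lt_T : t0 + 1 < T%:R.
Proof.
have sq_lt : (t0 + 1) ^+ 2 < T%:R * 9.
  move: T_gt; rewrite -expRM_natl mulr1 ltr_pdivrMr ?expR_gt0 // => /lt_le_trans; apply.
  by rewrite ler_wpM2l ?(expR2_le9 R).
have t0_gt9 : 9 * (t0 + 1) < (t0 + 1) * (t0 + 1).
  by rewrite ltr_pM2r; have := t0_ge20; lra.
rewrite expr2 in sq_lt; lra.
Qed.

Lemma ln_T_gt : 2 * ln (t0 + 1) - 2 < ln T%:R.
Proof.
have t0_gt : 0 < t0 + 1 by have := t0_ge20; lra.
move: T_gt; rewrite -ltr_ln ?posrE ?divr_gt0 ?exprn_gt0 ?expR_gt0 //; last first.
  exact: lt_trans t0_gt t0D1_lt_T.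
by rewrite ln_div ?posrE ?exprn_gt0 ?expR_gt0 // !lnXn ?expR_gt0 // expRK; lra.
Qed.

Lemma ln_t0_ge2 : 2 <= ln t0.
Proof.
rewrite -[leLHS]expRK ler_ln ?posrE ?expR_gt0 //; last by have := t0_ge20; lra.
by rewrite (le_trans (expR2_le9 R)) //; have := t0_ge20; lra.
Qed.

Let t0_gt0 : 0 < t0. Proof. by have := t0_ge20; lra. Qed.

Let t0_lt_T : t0 < T%:R. Proof. by have := t0D1_lt_T; lra. Qed.

Lemma arm_draws_mean_ge : 2 * C0 * lower_rate - 1 <= mu.
Proof.
have := sum_eps_prob_ge t0_gt0 t0_lt_T.
rewrite arm_draws_meanE ler_pdivlMr ?ltr0n // t0E; have := K_ge1; lra.
Qed.

Lemma arm_draws_mean_le : mu <= 2 * C0 * upper_rate.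
Proof.
have := sum_eps_prob_le t0_gt0 t0_lt_T.
rewrite arm_draws_meanE ler_pdivrMr ?ltr0n // t0E; lra.
Qed.

Let t0_ge0 : 0 <= t0. Proof. exact: ltW t0_gt0. Qed.

Let inv_T1E : (T%:R + 1)^-1 = expR (- ln (T%:R + 1)) :> R.
Proof. by rewrite expRN lnK // posrE ltr_wpDl. Qed.

Let ln_t0_lt_T1 : ln (t0 + 1) <= ln (T%:R + 1).
Proof. by rewrite ler_ln ?posrE ?ltr_wpDl ?lerD2r // ltW. Qed.

Let ln_T_le_T1 : ln T%:R <= ln (T%:R + 1) :> R.
Proof. by rewrite ler_ln ?posrE ?ltr_wpDl ?lerDl // (lt_trans t0_gt0). Qed.

Let ln_T1_ge2 : 2 <= ln (T%:R + 1) :> R.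
Proof.
have : ln t0 <= ln (T%:R + 1) :> R.
  by rewrite ler_ln ?posrE ?ltr_wpDl //; have := t0D1_lt_T; lra.
by have := ln_t0_ge2; lra.
Qed.

Lemma n_arm_lower_tail :
  Pr (fun w => ~~ (C0 * lower_rate <= (n_arm k w)%:R)) <= (T%:R + 1)^-1.
Proof.
have ln2_ge0 : 0 <= ln 2 :> R by rewrite ln_ge0 // ler1n.
apply: le_trans (eps_decay_Pr_sub t0_ge0
  (F := fun w => - ln 2 * (C0 * lower_rate) <= - ln 2 * (n_arm k w)%:R) _) _.
  by move=> w; rewrite -ltNge => /ltW n_le; rewrite !mulNr lerN2 ler_wpM2l.
apply: le_trans (eps_decay_Pr_chernoff T t0_ge0 k _ _) _.
rewrite inv_T1E ler_expR expRN lnK ?posrE //.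
have C0_ge0 : 0 <= C0 by have := C0_ge10; lra.
have lower_rate_ge0 : 0 <= lower_rate by have := ln_t0_lt_T1; lra.
have := ler_wpM2r (mulr_ge0 C0_ge0 lower_rate_ge0) (ln2_le R).
have := ler_wpM2r lower_rate_ge0 C0_ge10.
have := arm_draws_mean_ge.
have := ln_T_gt; have := ln_T_le_T1; have := ln_T1_ge2.
lra.
Qed.

Lemma n_arm_upper_tail :
  Pr (fun w => ~~ ((n_arm k w)%:R <= 3 * C0 * upper_rate)) <= (T%:R + 1)^-1.
Proof.
have ln32_ge := ln3half_ge R.
have ln32_ge0 : 0 <= ln (3 / 2) :> R by have := ln32_ge; lra.
apply: le_trans (eps_decay_Pr_sub t0_ge0
  (F := fun w => ln (3 / 2) * (3 * C0 * upper_rate) <= ln (3 / 2) * (n_arm k w)%:R) _) _.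
  by move=> w; rewrite -ltNge => /ltW n_ge; rewrite ler_wpM2l.
apply: le_trans (eps_decay_Pr_chernoff T t0_ge0 k _ _) _.
rewrite inv_T1E ler_expR lnK ?posrE ?divr_gt0 ?ltr0n //.
have T_gt0 : 0 < T%:R :> R by have := t0D1_lt_T; have := t0_ge20; lra.
have ln_t0_le : ln t0 <= ln (t0 + 1) by rewrite ler_ln ?posrE ?ltr_wpDl ?lerDl // ltW.
have ln_t0_le_T : ln t0 <= ln T%:R by rewrite ler_ln ?posrE // ltW.
have ln_T1_le : ln (T%:R + 1) - ln T%:R <= 21^-1 :> R.
  have T1_gt0 : 0 < T%:R + 1 :> R by rewrite ltr_wpDl ?ltW.
  apply: le_trans (lnB_le T_gt0 T1_gt0) _.
  rewrite (addrC _ 1) addrK div1r lef_pV2 ?posrE ?T_gt0 ?ltr0n //.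
  by have := t0D1_lt_T; have := t0_ge20; lra.
have C0_ge0 : 0 <= C0 by have := C0_ge10; lra.
have upper_rate_ge0 : 0 <= upper_rate by lra.
have := ler_wpM2r (mulr_ge0 C0_ge0 upper_rate_ge0) ln32_ge.
have := ler_wpM2r upper_rate_ge0 C0_ge10.
have := arm_draws_mean_le.
have := ln_T_gt; have := ln_t0_ge2.
lra.
Qed.

End ArmDrawsBounds.

Theorem proposition2 (R : realType) (K : finType) (C0 t0 : R) (T : nat) :
  10 <= C0 ->
  t0 = 2 * C0 * #|K|%:R ->
  (t0 + 1) ^+ 2 / (expR 1) ^+ 2 < T%:R ->
  forall k : K,
    1 - 2 / (T%:R + 1) <=
    eps_decay_Pr t0
      (fun w : {ffun 'I_T -> option K} =>
         (C0 * (1 + ln (T%:R + 1) - ln (t0 + 1)) <= (n_arm k w)%:R) &&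
         ((n_arm k w)%:R <= 3 * C0 * (1 + ln T%:R - ln t0))).
Proof.
move=> C0_ge10 t0E T_gt k.
have K_gt0 : (0 < #|K|)%N by apply/card_gt0P; exists k.
have t0_ge0 : 0 <= t0 by have := t0_ge20 k C0_ge10 t0E; lra.
apply: le_trans (eps_decay_PrI_ge t0_ge0 _ _ K_gt0).
have := n_arm_lower_tail k C0_ge10 t0E T_gt.
have := n_arm_upper_tail k C0_ge10 t0E T_gt.
lra.
Qed.
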